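(* Let $\{p_n\}_{n\ge0}$ be a sequence of real polynomials with $\deg p_n=n$, let $c\in\mathbb{R}$, fix $j\in\mathbb{N}\cup\{0\}$, and let $K_n^{(j,j)}(c,c)=\sum_{i=0}^n \big(p_i^{(j)}(c)\big)^2$. Assume there are real constants $a,b$ such that for every integer $k\ge0$, $p_n^{(k)}(c)\approx C_k(-1)^n n^{ak+b}$ as $n\to\infty$, with $C_k\neq0$ independent of $n$ and $2(ak+b)+1>0$. Let $\lambda_n=\gamma n^2+\delta n$ with $\gamma,\delta\in\mathbb{R}$, and define $$\alpha_n=\sum_{i=j+1}^n(\lambda_i-\lambda_{i-1})K_{i-1}^{(j,j)}(c,c),\qquad n\ge j+1.$$ Then $$\lim_{n\to+\infty}\frac{\alpha_n}{n^{2(aj+b)+3}}=\frac{2\gamma C_j^2}{(2(aj+b)+3)(2(aj+b)+1)}\quad\text{if }\gamma\ne0,$$ $$\lim_{n\to+\infty}\frac{\alpha_n}{n^{2(aj+b+1)}}=\frac{\delta C_j^2}{2(aj+b+1)(2(aj+b)+1)}\quad\text{if }\gamma=0.$$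
   Context: The notation $a_n\approx b_n$ means $\lim_{n\to+\infty}a_n/b_n=1$. *)

From HB Require Import structures.
From mathcomp Require Import all_boot all_order all_algebra.
From mathcomp Require Import all_classical all_reals all_analysis.
Set Implicit Arguments. Unset Strict Implicit. Unset Printing Implicit Defensive.
Import Order.TTheory GRing.Theory Num.Theory.
Local Open Scope ring_scope.

Definition Kjj (R : realType) (p : nat -> {poly R}) (j : nat) (c : R) (n : nat) : R :=
  \sum_(i < n.+1) ((p i)^`(j)).[c] ^+ 2.

Definition lam (R : realType) (gamma delta : R) (n : nat) : R :=
  gamma * (n%:R) ^+ 2 + delta * n%:R.

Definition alpha (R : realType) (p : nat -> {poly R}) (j : nat) (c gamma delta : R)
  (n : nat) : R :=
  \sum_(j.+1 <= i < n.+1)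
     (lam gamma delta i - lam gamma delta i.-1) * Kjj p j c i.-1.

From HB Require Import structures.
From mathcomp Require Import all_boot all_order all_algebra.
From mathcomp Require Import all_classical all_reals all_analysis.
From mathcomp Require Import ring lra.
Import Order.TTheory GRing.Theory Num.Theory.
Import numFieldNormedType.Exports.
Local Open Scope classical_set_scope.
Local Open Scope ring_scope.

(* Both limits come from one Stolz-Cesaro computation: if u_n ~ L n^r with
   r > -1, then sum_{i<n} u_i ~ L n^(r+1) / (r+1).  Applied to the squares
   (p_i^(j)(c))^2 ~ C_j^2 i^(2(aj+b)) it gives
   K_(n-1)^(j,j)(c,c) ~ C_j^2 n^(2(aj+b)+1) / (2(aj+b)+1); the increments
   lambda_i - lambda_(i-1) = gamma (2i-1) + delta behave like 2 gamma i when
   gamma != 0 and equal delta when gamma = 0, so a second application to the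
   summands of alpha_n yields both limits. *)

Lemma ler_dist_telescope (R : numDomainType) (d w : nat -> R) (N : nat) :
  (forall n, (N <= n)%N -> `|d n.+1 - d n| <= w n.+1 - w n) ->
  forall n, (N <= n)%N -> `|d n - d N| <= w n - w N.
Proof.
move=> dw; elim=> [|n IH]; first by rewrite leqn0 => /eqP->; rewrite !subrr normr0.
rewrite leq_eqVlt => /predU1P[<-|]; first by rewrite !subrr normr0.
rewrite ltnS => Nn.
have split_at (f : nat -> R) : f n.+1 - f N = (f n.+1 - f n) + (f n - f N).
  by rewrite addrA subrK.
rewrite !split_at (le_trans (ler_normD _ _)) // lerD ?dw ?IH //.
Qed.

Lemma stolz_cesaro (R : realFieldType) (a b : R^nat) (L : R) :
  (forall n, b n < b n.+1) -> b @ \oo --> +oo ->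
  (fun n => (a n.+1 - a n) / (b n.+1 - b n)) @ \oo --> L ->
  (fun n => a n / b n) @ \oo --> L.
Proof.
move=> b_incr /cvgryPge b_oo /cvgrPdist_le dq; apply/cvgrPdist_le => e e0.
set f := e / 2; have f0 : 0 < f by rewrite divr_gt0.
have [N _ dqN] := dq f f0.
pose d n := a n - L * b n.
have dN n : (N <= n)%N -> `|d n - d N| <= f * b n - f * b N.
  apply: (@ler_dist_telescope _ d (fun n => f * b n)) => k Nk.
  have db : 0 < b k.+1 - b k by rewrite subr_gt0.
  have -> : d k.+1 - d k = ((a k.+1 - a k) / (b k.+1 - b k) - L) * (b k.+1 - b k).
    by rewrite mulrBl divfK ?gt_eqF // /d; ring.
  by rewrite /= normrM (gtr0_norm db) -mulrBr ler_pM2r // distrC; apply: (dqN k).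
near=> n.
have bn_gt0 : 0 < b n by near: n; apply: filterS (b_oo 1) => m; apply: lt_le_trans.
have bn_ge : `|d N| + f * `|b N| <= f * b n.
  by rewrite [f * b n]mulrC -ler_pdivrMr //; near: n; exact: b_oo.
have Nn : (N <= n)%N by near: n; exact: nbhs_infty_ge.
have dnN := dN n Nn.
have dn := ler_normD (d n - d N) (d N); rewrite subrK in dn.
have bN : f * - b N <= f * `|b N| by rewrite ler_pM2l // ler_normr lexx orbT.
have -> : L - a n / b n = - d n / b n by rewrite /d; field; rewrite gt_eqF.
rewrite normrM normrN normfV (gtr0_norm bn_gt0) ler_pdivrMr //.
rewrite mulrN in bN; rewrite /f in dn dnN bn_ge bN *; lra.
Unshelve. all: end_near. Qed.

Section PowR.
Context {R : realType}.

Lemma cvgr_natV : (fun n : nat => (n%:R : R)^-1) @ \oo --> 0.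
Proof. by rewrite -cvg_shiftS; exact: cvg_harmonic. Qed.

Lemma powR_natr_cvgy (t : R) : 0 < t -> (fun n : nat => n%:R `^ t) @ \oo --> +oo.
Proof.
move=> t0; apply/cvgryPge => A; set M := Num.max A 1.
have M0 : 0 < M by rewrite lt_max ltr01 orbT.
near=> n.
have Mn : M `^ t^-1 <= n%:R by near: n; exact: nbhs_infty_ger.
apply: (@le_trans _ _ M); first by rewrite le_max lexx.
have -> : M = (M `^ t^-1) `^ t by rewrite -powRrM mulVf ?lt0r_neq0 ?powRr1 ?ltW.
by apply: ge0_ler_powR; rewrite ?nnegrE ?powR_ge0 ?ler0n // ltW.
Unshelve. all: end_near. Qed.

Lemma powR_succ_sub (r x : R) : 0 < x ->
  (x + 1) `^ (r + 1) - x `^ (r + 1) = x `^ r * (x * ((1 + x^-1) `^ (r + 1) - 1)).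
Proof.
move=> x0.
have -> : x + 1 = x * (1 + x^-1) by rewrite mulrDr mulr1 divff ?gt_eqF.
rewrite powRM ?(ltW x0) //; last by rewrite addr_ge0 // invr_ge0 ltW.
rewrite powRD ?(gt_eqF x0) ?implybT // powRr1 ?ltW //; ring.
Qed.

Lemma cvg_powR_diff_quotient (t : R) :
  (fun n : nat => n%:R * ((1 + n%:R^-1) `^ t - 1)) @ \oo --> t.
Proof.
have [+ Dt] := is_derive1_powR t (@ltr01 R).
rewrite /derivable -/(derive _ _ _) Dt powR1 mulr1.
move/cvgr_dnbhsP => /(_ (fun n => n.+1%:R^-1)) dq.
rewrite -cvg_shiftS; apply: cvg_trans (dq _); last first.
  split; [by move=> n; rewrite invr_eq0 pnatr_eq0 | exact: cvg_harmonic].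
apply: near_eq_cvg; apply: nearW => n /=.
by rewrite invrK /GRing.scale /= mulr1 (addrC 1).
Qed.

Lemma cvg_sum_div_powR {r L : R} {u : R^nat} : -1 < r ->
  (fun n => u n / n%:R `^ r) @ \oo --> L ->
  (fun n => (\sum_(i < n) u i) / n%:R `^ (r + 1)) @ \oo --> L / (r + 1).
Proof.
move=> r_gt uL; have r1_gt0 : 0 < r + 1 by lra.
apply: stolz_cesaro.
- by move=> n; apply: gt0_ltr_powR; rewrite ?nnegrE ?ler0n ?ltr_nat.
- exact: powR_natr_cvgy.
apply: cvg_trans;
  last exact: cvgM uL (cvgV (lt0r_neq0 r1_gt0) (cvg_powR_diff_quotient (r + 1))).
apply: near_eq_cvg; near=> n.
have n_gt0 : 0 < n%:R :> R by rewrite ltr0n; near: n; exact: nbhs_infty_gt.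
by rewrite big_ord_recr /= addrC addrK -natr1 powR_succ_sub // -mulrA -invfM.
Unshelve. all: end_near. Qed.

Lemma cvg_sumS_div_powR {r L : R} {u : R^nat} : -1 < r ->
  (fun n => u n / n%:R `^ r) @ \oo --> L ->
  (fun n => (\sum_(i < n.+1) u i) / n%:R `^ (r + 1)) @ \oo --> L / (r + 1).
Proof.
move=> r_gt uL.
have -> : L / (r + 1) = L / (r + 1) + L * 0 by rewrite mulr0 addr0.
apply: cvg_trans; last exact: cvgD (cvg_sum_div_powR r_gt uL) (cvgM uL cvgr_natV).
apply: near_eq_cvg; near=> n.
have n_gt0 : 0 < n%:R :> R by rewrite ltr0n; near: n; exact: nbhs_infty_gt.
rewrite !fctE /= big_ord_recr /= mulrDl; congr (_ + _).
by rewrite powRD ?powRr1 ?ltW ?lt0r_neq0 ?implybT // invfM mulrA.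
Unshelve. all: end_near. Qed.

End PowR.

Lemma sqr_div_cvg (R : numFieldType) (u v : R^nat) (C : R) : C != 0 ->
  (fun n => u n / (C * (-1) ^+ n * v n)) @ \oo --> (1 : R) ->
  (fun n => (u n / v n) ^+ 2) @ \oo --> C ^+ 2.
Proof.
move=> C_neq0 uv; have -> : C ^+ 2 = C ^+ 2 * (1 * 1) by rewrite !mulr1.
apply: cvg_trans; last exact: cvgM (cvg_cst _) (cvgM uv uv).
apply: near_eq_cvg; apply: nearW => n /=.
have Cs_neq0 : C * (-1) ^+ n != 0 by rewrite mulf_neq0 ?signr_eq0.
have -> : u n / v n = C * (-1) ^+ n * (u n / (C * (-1) ^+ n * v n)).
  by rewrite invfM mulrCA !mulrA -(mulrA (u n)) mulfK.
by rewrite -expr2 !exprMn sqrr_sign mulr1.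
Qed.

Lemma lam_sub_pred (R : realType) (gamma delta : R) (n : nat) : (0 < n)%N ->
  lam gamma delta n - lam gamma delta n.-1 = gamma * (2 * n%:R - 1) + delta.
Proof. by case: n => // n _; rewrite /lam -natr1 /=; ring. Qed.

Lemma lam_sub_pred_cvg (R : realType) (gamma delta : R) :
  (fun n => (lam gamma delta n - lam gamma delta n.-1) / n%:R `^ 1) @ \oo -->
  2 * gamma.
Proof.
have -> : 2 * gamma = 2 * gamma + (delta - gamma) * 0 by rewrite mulr0 addr0.
apply: cvg_trans; last exact: cvgD (cvg_cst _) (cvgM (cvg_cst _) cvgr_natV).
apply: near_eq_cvg; near=> n.
have n_gt0 : (0 < n)%N by near: n; exact: nbhs_infty_gt.
rewrite !fctE /= lam_sub_pred // powRr1 ?ler0n //; field.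
by rewrite pnatr_eq0 -lt0n.
Unshelve. all: end_near. Qed.

Lemma lam0_sub_pred_cvg (R : realType) (delta : R) :
  (fun n => (lam 0 delta n - lam 0 delta n.-1) / n%:R `^ 0) @ \oo --> delta.
Proof.
apply: cvg_near_cst; near=> n.
have n_gt0 : (0 < n)%N by near: n; exact: nbhs_infty_gt.
by rewrite lam_sub_pred // powRr0 divr1 mul0r add0r.
Unshelve. all: end_near. Qed.

Section Alpha.
Context {R : realType} {p : nat -> {poly R}} {j : nat} {c x Cj : R}.
Hypothesis x_gt : -1 < 2 * x.
Hypothesis sqr_deriv_cvg :
  (fun n => ((p n)^`(j)).[c] ^+ 2 / n%:R `^ (2 * x)) @ \oo --> Cj ^+ 2.

Lemma Kjj_pred_cvg :
  (fun n => Kjj p j c n.-1 / n%:R `^ (2 * x + 1)) @ \oo --> Cj ^+ 2 / (2 * x + 1).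
Proof.
apply: cvg_trans; last exact: cvg_sum_div_powR x_gt sqr_deriv_cvg.
apply: near_eq_cvg; near=> n.
have n_gt0 : (0 < n)%N by near: n; exact: nbhs_infty_gt.
by rewrite /Kjj prednK.
Unshelve. all: end_near. Qed.

Lemma alpha_cvg {gamma delta e D : R} : 0 <= e ->
  (fun n => (lam gamma delta n - lam gamma delta n.-1) / n%:R `^ e) @ \oo --> D ->
  (fun n => alpha p j c gamma delta n / n%:R `^ (2 * x + 1 + e + 1)) @ \oo -->
  D * Cj ^+ 2 / ((2 * x + 1 + e + 1) * (2 * x + 1)).
Proof.
move=> e_ge0 lam_cvg.
pose w i := if (j < i)%N
  then (lam gamma delta i - lam gamma delta i.-1) * Kjj p j c i.-1 else 0.
have alphaE n : alpha p j c gamma delta n = \sum_(i < n.+1) w i.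
  by rewrite /alpha big_geq_mkord big_mkcond.
have w_cvg : (fun i => w i / i%:R `^ (2 * x + 1 + e)) @ \oo -->
    D * (Cj ^+ 2 / (2 * x + 1)).
  apply: cvg_trans; last exact: cvgM lam_cvg Kjj_pred_cvg.
  apply: near_eq_cvg; near=> i.
  have ji : (j < i)%N by near: i; exact: nbhs_infty_gt.
  have i_gt0 : 0 < i%:R :> R by rewrite ltr0n (leq_ltn_trans _ ji).
  rewrite /w ji powRD ?lt0r_neq0 ?implybT // invfM /=; ring.
have r_gt : -1 < 2 * x + 1 + e by move: x_gt; lra.
under eq_fun => n do rewrite alphaE.
rewrite (_ : D * _ / _ = D * (Cj ^+ 2 / (2 * x + 1)) / (2 * x + 1 + e + 1)); last first.
  by rewrite mulrA [in RHS]mulrAC invfM mulrA.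
exact: cvg_sumS_div_powR r_gt w_cvg.
Unshelve. all: end_near. Qed.

End Alpha.

Theorem proposition1 (R : realType) (p : nat -> {poly R}) (c : R) (j : nat)
    (a b : R) (C : nat -> R) (gamma delta : R) :
  (forall n, size (p n) = n.+1) ->
  (forall k : nat, C k != 0 /\ 0 < 2 * (a * k%:R + b) + 1 /\
     (fun n : nat => ((p n)^`(k)).[c] /
        (C k * (-1) ^+ n * (n%:R `^ (a * k%:R + b)))) @ \oo --> (1 : R)) ->
  (gamma != 0 ->
     (fun n : nat => alpha p j c gamma delta n /
        (n%:R `^ (2 * (a * j%:R + b) + 3))) @ \oo -->
     (2 * gamma * C j ^+ 2 /
        ((2 * (a * j%:R + b) + 3) * (2 * (a * j%:R + b) + 1))))
  /\
  (gamma = 0 ->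
     (fun n : nat => alpha p j c gamma delta n /
        (n%:R `^ (2 * (a * j%:R + b + 1)))) @ \oo -->
     (delta * C j ^+ 2 /
        (2 * (a * j%:R + b + 1) * (2 * (a * j%:R + b) + 1)))).
Proof.
move=> _ asym; have [Cj_neq0 [x_gt ratio_cvg]] := asym j.
set x := a * j%:R + b in x_gt ratio_cvg *.
have {}x_gt : -1 < 2 * x by lra.
have sqr_cvg : (fun n => ((p n)^`(j)).[c] ^+ 2 / n%:R `^ (2 * x)) @ \oo --> C j ^+ 2.
  under eq_fun => n do rewrite (mulrC 2 x) powRrM powR_mulrn ?powR_ge0 // -expr_div_n.
  exact: sqr_div_cvg Cj_neq0 ratio_cvg.
split=> [_ | ->].
- have -> : 2 * x + 3 = 2 * x + 1 + 1 + 1 by ring.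
  by apply: (alpha_cvg x_gt sqr_cvg ler01); apply: lam_sub_pred_cvg.
- have -> : 2 * (x + 1) = 2 * x + 1 + 0 + 1 by ring.
  by apply: (alpha_cvg x_gt sqr_cvg (lexx 0)); apply: lam0_sub_pred_cvg.
Qed.
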